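(* Let $x_0$ be the real root in $(0,1)$ and $x_1$ the real root in $(-2,-1)$ of the polynomial $x^6 + x^5 - 2 x^3 + 2 x - 1$, and put $y = \frac{1}{1-x_1}$. Then \[ \operatorname{L}(x_0) + \operatorname{L}(y) = \frac{4\pi^2}{21}. \]
   Context: $\operatorname{L}(x) := \operatorname{Li}_2(x) + \frac12 \ln x \ln(1-x)$ is the Rogers dilogarithm, where $\operatorname{Li}_2(x)=\sum_{n\ge1}x^n/n^2$ for $0<x<1$. *)

From Stdlib Require Import Reals.
From Coquelicot Require Import Coquelicot.
Open Scope R_scope.

(* Dilogarithm Li_2(x) = sum_{n>=1} x^n / n^2 (used for 0 < x < 1),
   written with index shift k = n-1. *)
Definition Li2 (x : R) : R :=
  Series (fun k : nat => x ^ (S k) / (INR (S k)) ^ 2).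

Definition RogersL (x : R) : R := Li2 x + / 2 * ln x * ln (1 - x).

Definition P6 (x : R) : R := x ^ 6 + x ^ 5 - 2 * x ^ 3 + 2 * x - 1.

(* The Rogers dilogarithm L is differentiable on (0,1) with
   L'(x) = - (ln (1 - x) / x + ln x / (1 - x)) / 2, so the defects of Euler's reflection
   L(x) + L(1 - x) = pi^2/6 and of Abel's five-term relation have derivative 0; their
   constant values are read off at the ends of the interval, using that L is continuous at 0 and that
   Li2(1) = zeta(2) = pi^2/6 (Matsuoka's Wallis-integral proof of the Basel problem together
   with Abel's theorem on power series).
   The map x |-> x^3 / (x - 1) permutes the roots of P6 and sends x0 to the root x1 in (-2,-1),
   so y = 1 / (1 - x1) = 2 - x0 - x0^2 - x0^3 lies in Q(x0). Six five-term relations and nine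
   reflections among explicit elements of Q(x0) in (0,1), checked modulo P6 and located in (0,1)
   using 0.7 < x0 < 0.701, add up to 7 (L(x0) + L(y)) = 8 pi^2/6. *)

From Stdlib Require Import Reals Lra Lia Nsatz.
From Coquelicot Require Import Coquelicot.
Open Scope R_scope.

Lemma is_derive_continuous (f : R -> R) (x l : R) :
  is_derive f x l -> continuous f x.
Proof. intro Hf. apply (ex_derive_continuous (V := R_NormedModule)). exists l. exact Hf. Qed.

Lemma filterlim_Rplus {T : Type} {F : (T -> Prop) -> Prop} {FF : Filter F}
  (f g : T -> R) (a b : R) :
  filterlim f F (locally a) -> filterlim g F (locally b) ->
  filterlim (fun t => f t + g t) F (locally (a + b)).
Proof.
  intros Hf Hg. eapply filterlim_comp_2; [exact Hf | exact Hg |].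
  apply (filterlim_plus (K := R_AbsRing) (V := R_NormedModule)).
Qed.

Lemma is_derive_0_const (F : R -> R) (a b : R) :
  (forall t, a < t < b -> is_derive F t 0) ->
  forall x y, a < x < b -> a < y < b -> F x = F y.
Proof.
  intros HF x y Hx Hy.
  destruct (Rtotal_order x y) as [Hxy | [<- | Hyx]]; [| reflexivity |].
  - apply eq_is_derive; [intros t Ht; apply HF; lra | exact Hxy].
  - symmetry. apply eq_is_derive; [intros t Ht; apply HF; lra | exact Hyx].
Qed.

Lemma is_derive_0_lim (F : R -> R) (a b l : R)
  (G : (R -> Prop) -> Prop) {FG : ProperFilter G} :
  (forall t, a < t < b -> is_derive F t 0) -> G (fun t => a < t < b) ->
  filterlim F G (locally l) -> forall x, a < x < b -> F x = l.
Proof.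
  intros HF HG Hlim x Hx.
  refine (@filterlim_locally_unique R R_AbsRing R_NormedModule G
    (Proper_StrongProper _ FG) F (F x) l _ Hlim).
  apply filterlim_ext_loc with (fun _ => F x); [| apply filterlim_const].
  apply (filter_imp (fun t => a < t < b)); [| exact HG].
  intros t Ht. exact (is_derive_0_const F a b HF x t Hx Ht).
Qed.

Lemma at_right_interval (a b : R) : a < b -> at_right a (fun t => a < t < b).
Proof.
  intro Hab. assert (Hba : 0 < b - a) by lra.
  exists (mkposreal _ Hba). intros t Ht Hat.
  apply (proj1 (Rabs_lt_between' _ _ _)) in Ht. simpl in Ht. lra.
Qed.

Lemma at_left_interval (a b : R) : a < b -> at_left b (fun t => a < t < b).
Proof.
  intro Hab. assert (Hba : 0 < b - a) by lra.
  exists (mkposreal _ Hba). intros t Ht Htb.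
  apply (proj1 (Rabs_lt_between' _ _ _)) in Ht. simpl in Ht. lra.
Qed.

Lemma continuous_at_right (f : R -> R) (x : R) :
  continuous f x -> filterlim f (at_right x) (locally (f x)).
Proof. apply filterlim_filter_le_1, filter_le_within. Qed.

Lemma continuous_at_left (f : R -> R) (x : R) :
  continuous f x -> filterlim f (at_left x) (locally (f x)).
Proof. apply filterlim_filter_le_1, filter_le_within. Qed.

Definition wallis_I (n : nat) : R := RInt (fun t => cos t ^ (2 * n)) 0 (PI / 2).
Definition wallis_J (n : nat) : R := RInt (fun t => t ^ 2 * cos t ^ (2 * n)) 0 (PI / 2).

Lemma is_derive_cos_pow (k : nat) (t : R) :
  is_derive (fun t => cos t ^ S k) t (INR (S k) * - sin t * cos t ^ k).
Proof. exact (is_derive_pow cos (S k) t _ (is_derive_cos t)). Qed.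

Lemma continuous_cos_pow (k : nat) (t : R) : continuous (fun t => cos t ^ k) t.
Proof. apply (ex_derive_continuous (V := R_NormedModule)). auto_derive. trivial. Qed.

Lemma continuous_sq_cos_pow (k : nat) (t : R) : continuous (fun t => t ^ 2 * cos t ^ k) t.
Proof. apply (ex_derive_continuous (V := R_NormedModule)). auto_derive. trivial. Qed.

Lemma is_RInt_wallis_I (n : nat) : is_RInt (fun t => cos t ^ (2 * n)) 0 (PI / 2) (wallis_I n).
Proof.
  apply (RInt_correct (V := R_CompleteNormedModule)),
    (ex_RInt_continuous (V := R_CompleteNormedModule)).
  intros t _. apply continuous_cos_pow.
Qed.

Lemma is_RInt_wallis_J (n : nat) :
  is_RInt (fun t => t ^ 2 * cos t ^ (2 * n)) 0 (PI / 2) (wallis_J n).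
Proof.
  apply (RInt_correct (V := R_CompleteNormedModule)),
    (ex_RInt_continuous (V := R_CompleteNormedModule)).
  intros t _. apply continuous_sq_cos_pow.
Qed.

Lemma is_RInt_lin (f g : R -> R) (a b If Ig c d : R) :
  is_RInt f a b If -> is_RInt g a b Ig ->
  is_RInt (fun t => c * f t + d * g t) a b (c * If + d * Ig).
Proof.
  intros Hf Hg.
  exact (is_RInt_plus _ _ _ _ _ _ (is_RInt_scal _ _ _ c _ Hf) (is_RInt_scal _ _ _ d _ Hg)).
Qed.

Lemma is_RInt_lin3 (f g h : R -> R) (a b If Ig Ih c d e : R) :
  is_RInt f a b If -> is_RInt g a b Ig -> is_RInt h a b Ih ->
  is_RInt (fun t => c * f t + d * g t + e * h t) a b (c * If + d * Ig + e * Ih).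
Proof.
  intros Hf Hg Hh.
  exact (is_RInt_plus _ _ _ _ _ _ (is_RInt_lin _ _ _ _ _ _ c d Hf Hg) (is_RInt_scal _ _ _ e _ Hh)).
Qed.

Lemma is_RInt_of_derive (G g : R -> R) (a b : R) :
  (forall t, is_derive G t (g t)) -> (forall t, continuous g t) -> is_RInt g a b (G b - G a).
Proof.
  intros HG Hg. apply (is_RInt_derive (V := R_CompleteNormedModule)); intros t _; auto.
Qed.

Lemma is_RInt_unique_eq (f : R -> R) (a b l1 l2 : R) :
  is_RInt f a b l1 -> is_RInt f a b l2 -> l1 = l2.
Proof.
  intros H1 H2. rewrite <- (is_RInt_unique _ _ _ _ H1). exact (is_RInt_unique _ _ _ _ H2).
Qed.

Lemma pow_2S (c : R) (n : nat) : c ^ (2 * S n) = c * (c * c ^ (2 * n)).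
Proof. replace (2 * S n)%nat with (S (S (2 * n))) by lia. reflexivity. Qed.

Lemma wallis_I_S (n : nat) : 2 * (INR n + 1) * wallis_I (S n) = (2 * INR n + 1) * wallis_I n.
Proof.
  set (g := fun t => 2 * (INR n + 1) * cos t ^ (2 * S n) + - (2 * INR n + 1) * cos t ^ (2 * n)).
  assert (Hg : forall t, is_derive (fun t => sin t * cos t ^ S (2 * n)) t (g t)).
  { intro t.
    refine (eq_ind _ (is_derive _ t) (is_derive_mult _ _ t _ _ (is_derive_sin t)
              (is_derive_cos_pow (2 * n) t) Rmult_comm) _ _).
    unfold g. rewrite pow_2S, S_INR, mult_INR. set (p := cos t ^ (2 * n)). simpl.
    pose proof (sin2_cos2 t) as Hsc. unfold Rsqr in Hsc. nsatz. }
  assert (Hzero := is_RInt_of_derive _ g 0 (PI / 2) Hg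
                    (fun t => ex_derive_continuous (V := R_NormedModule) g t
                                ltac:(unfold g; auto_derive; trivial))).
  cbv beta in Hzero.
  rewrite cos_PI2, sin_0, pow_i, Rmult_0_l, Rmult_0_r, Rminus_0_r in Hzero by lia.
  assert (Hval := is_RInt_lin _ _ _ _ _ _ (2 * (INR n + 1)) (- (2 * INR n + 1))
                    (is_RInt_wallis_I (S n)) (is_RInt_wallis_I n)).
  pose proof (is_RInt_unique_eq g _ _ _ _ Hval Hzero). lra.
Qed.

Lemma wallis_J_S (n : nat) :
  wallis_I (S n) + 2 * (INR n + 1) ^ 2 * wallis_J (S n)
  = (INR n + 1) * (2 * INR n + 1) * wallis_J n.
Proof.
  set (G := fun t => t * cos t ^ S (S (2 * n))
                     + (INR n + 1) * (t * t * (sin t * cos t ^ S (2 * n)))).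
  set (g := fun t => 1 * cos t ^ (2 * S n) + 2 * (INR n + 1) ^ 2 * (t ^ 2 * cos t ^ (2 * S n))
                     + - ((INR n + 1) * (2 * INR n + 1)) * (t ^ 2 * cos t ^ (2 * n))).
  assert (Hg : forall t, is_derive G t (g t)).
  { intro t.
    assert (Ht := is_derive_id t).
    assert (H1 := is_derive_mult _ _ t _ _ Ht (is_derive_cos_pow (S (2 * n)) t) Rmult_comm).
    assert (Htt := is_derive_mult _ _ t _ _ Ht Ht Rmult_comm).
    assert (Hsc := is_derive_mult _ _ t _ _ (is_derive_sin t) (is_derive_cos_pow (2 * n) t)
                     Rmult_comm).
    assert (H2 := is_derive_scal _ t (INR n + 1) _ (is_derive_mult _ _ t _ _ Htt Hsc Rmult_comm)).
    refine (eq_ind _ (is_derive G t) (is_derive_plus _ _ t _ _ H1 H2) _ _).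
    unfold g. rewrite !pow_2S, !S_INR, mult_INR. set (p := cos t ^ (2 * n)).
    unfold plus, mult, scal, one. simpl.
    pose proof (sin2_cos2 t) as Hs. unfold Rsqr in Hs. nsatz. }
  assert (Hzero := is_RInt_of_derive G g 0 (PI / 2) Hg
                    (fun t => ex_derive_continuous (V := R_NormedModule) g t
                                ltac:(unfold g; auto_derive; trivial))).
  unfold G in Hzero.
  rewrite cos_PI2, sin_0, !pow_i, !Rmult_0_l, !Rmult_0_r, !Rplus_0_r, Rminus_0_r in Hzero by lia.
  assert (Hval := is_RInt_lin3 _ _ _ _ _ _ _ _ 1 (2 * (INR n + 1) ^ 2)
                    (- ((INR n + 1) * (2 * INR n + 1))) (is_RInt_wallis_I (S n))
                    (is_RInt_wallis_J (S n)) (is_RInt_wallis_J n)).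
  pose proof (is_RInt_unique_eq g _ _ _ _ Hval Hzero). lra.
Qed.

Lemma wallis_I_0 : wallis_I 0 = PI / 2.
Proof.
  apply is_RInt_unique.
  replace (PI / 2) with (PI / 2 - 0) at 2 by ring.
  apply (is_RInt_of_derive (fun t => t));
    [intro t; auto_derive; trivial | apply continuous_cos_pow].
Qed.

Lemma wallis_J_0 : wallis_J 0 = PI ^ 3 / 24.
Proof.
  apply is_RInt_unique.
  replace (PI ^ 3 / 24) with ((PI / 2) ^ 3 / 3 - 0 ^ 3 / 3) by field.
  apply (is_RInt_of_derive (fun t => t ^ 3 / 3));
    [intro t; auto_derive; [trivial | simpl; field] | apply continuous_sq_cos_pow].
Qed.

Lemma wallis_I_pos (n : nat) : 0 < wallis_I n.
Proof.
  induction n as [| n IH].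
  - rewrite wallis_I_0. pose proof PI_RGT_0. lra.
  - pose proof (wallis_I_S n). pose proof (pos_INR n).
    apply (Rmult_lt_reg_l (2 * (INR n + 1))); [lra |]. nra.
Qed.

Lemma sin_ge_third (t : R) : 0 <= t <= PI / 2 -> t <= 3 * sin t.
Proof.
  intro Ht. pose proof PI_4.
  destruct (pre_sin_bound t 0 ltac:(lra) ltac:(lra)) as [Hsin _].
  unfold sin_approx, sin_term in Hsin. simpl in Hsin. nra.
Qed.

Lemma cos_pow_even_nonneg (t : R) (n : nat) : 0 <= cos t ^ (2 * n).
Proof. rewrite pow_mult. apply pow_le. nra. Qed.

Lemma wallis_J_bounds (n : nat) : 0 <= wallis_J n <= 9 * (wallis_I n - wallis_I (S n)).
Proof.
  pose proof PI_RGT_0. split.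
  - apply Rle_trans with ((PI / 2 - 0) * 0); [lra |].
    apply (is_RInt_le _ _ 0 (PI / 2) _ _ ltac:(lra) (is_RInt_const 0 (PI / 2) 0)
             (is_RInt_wallis_J n)).
    intros t _. apply Rmult_le_pos; [apply pow2_ge_0 | apply cos_pow_even_nonneg].
  - replace (9 * (wallis_I n - wallis_I (S n))) with (9 * wallis_I n + -9 * wallis_I (S n)) by ring.
    apply (is_RInt_le _ _ 0 (PI / 2) _ _ ltac:(lra) (is_RInt_wallis_J n)
             (is_RInt_lin _ _ _ _ _ _ 9 (-9) (is_RInt_wallis_I n) (is_RInt_wallis_I (S n)))).
    intros t Ht. rewrite pow_2S.
    assert (0 <= sin t) by (apply sin_ge_0; pose proof PI2_Rlt_PI; lra).
    pose proof (sin_ge_third t ltac:(lra)). pose proof (cos_pow_even_nonneg t n).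
    pose proof (sin2_cos2 t) as Hsc. unfold Rsqr in Hsc.
    assert (t ^ 2 <= 9 * (sin t * sin t)) by nra.
    replace (9 * cos t ^ (2 * n) + -9 * (cos t * (cos t * cos t ^ (2 * n))))
      with (9 * (sin t * sin t) * cos t ^ (2 * n)) by nra.
    apply Rmult_le_compat_r; lra.
Qed.

Definition wallis_ratio (n : nat) : R := wallis_J n / wallis_I n.

Lemma wallis_ratio_bounds (n : nat) : 0 <= wallis_ratio n <= 9 / (2 * INR n + 2).
Proof.
  pose proof (wallis_I_pos n). pose proof (wallis_I_S n). pose proof (pos_INR n).
  pose proof (wallis_J_bounds n).
  unfold wallis_ratio. split; [apply Rdiv_le_0_compat; lra |].
  apply (Rmult_le_reg_r (wallis_I n)); [lra |].
  unfold Rdiv. rewrite Rmult_assoc, Rinv_l, Rmult_1_r by lra.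
  apply (Rmult_le_reg_l (2 * INR n + 2)); [lra |].
  replace ((2 * INR n + 2) * (9 * / (2 * INR n + 2) * wallis_I n)) with (9 * wallis_I n)
    by (field; lra).
  nra.
Qed.

Lemma wallis_ratio_S (n : nat) : / (INR n + 1) ^ 2 = 2 * (wallis_ratio n - wallis_ratio (S n)).
Proof.
  pose proof (wallis_I_pos n). pose proof (wallis_I_pos (S n)).
  pose proof (wallis_I_S n). pose proof (wallis_J_S n). pose proof (pos_INR n).
  unfold wallis_ratio.
  replace (wallis_J n) with ((wallis_I (S n) + 2 * (INR n + 1) ^ 2 * wallis_J (S n))
                             / ((INR n + 1) * (2 * INR n + 1))) by (field_simplify_eq; lra).
  replace (wallis_I n) with (2 * (INR n + 1) * wallis_I (S n) / (2 * INR n + 1))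
    by (field_simplify_eq; lra).
  field. lra.
Qed.

Lemma sum_inv_sq (N : nat) :
  @eq R (sum_n (fun k => / INR (S k) ^ 2) N) (PI ^ 2 / 6 - 2 * wallis_ratio (S N)).
Proof.
  induction N as [| N IH].
  - rewrite sum_O. pose proof (wallis_ratio_S 0) as H. pose proof PI_RGT_0.
    unfold wallis_ratio at 1 in H. rewrite wallis_I_0, wallis_J_0 in H. simpl INR in *.
    rewrite Rplus_0_l in H. rewrite H. field. apply PI_neq0.
  - pose proof (wallis_ratio_S (S N)) as H. rewrite <- S_INR in H.
    rewrite sum_Sn, IH, H. unfold plus. simpl. ring.
Qed.

Lemma basel : is_series (fun k => / INR (S k) ^ 2) (PI ^ 2 / 6).
Proof.
  assert (Hratio : is_lim_seq (fun N => 2 * wallis_ratio (S N)) 0).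
  { apply is_lim_seq_le_le with (fun _ => 0) (fun N => 18 * / INR (S N)).
    - intro N. pose proof (wallis_ratio_bounds (S N)) as [H0 H9]. pose proof (pos_INR N).
      rewrite S_INR in *. split; [lra |].
      apply Rle_trans with (2 * (9 / (2 * (INR N + 1) + 2))); [lra |].
      unfold Rdiv. rewrite <- Rmult_assoc. apply Rmult_le_compat_l; [lra |].
      apply Rinv_le_contravar; lra.
    - apply is_lim_seq_const.
    - assert (H := is_lim_seq_inv INR p_infty is_lim_seq_INR ltac:(discriminate)).
      apply is_lim_seq_incr_1 in H.
      replace 0 with (18 * 0) by ring. exact (is_lim_seq_scal_l _ 18 _ H). }
  assert (H := is_lim_seq_minus' _ _ _ _ (is_lim_seq_const (PI ^ 2 / 6)) Hratio).
  rewrite Rminus_0_r in H.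
  apply (is_lim_seq_ext _ _ _ (fun N => eq_sym (sum_inv_sq N)) H).
Qed.

Definition Li2_coef (k : nat) : R := / INR (S k) ^ 2.
Definition log_coef (k : nat) : R := / INR (S k).

Lemma Li2_PSeries (x : R) : Li2 x = PSeries (PS_incr_1 Li2_coef) x.
Proof.
  rewrite PSeries_incr_1. unfold PSeries, Li2. rewrite <- Series_scal_l.
  apply Series_ext. intro k. unfold Li2_coef, Rdiv. simpl. ring.
Qed.

Lemma Li2_0 : Li2 0 = 0.
Proof. rewrite Li2_PSeries, PSeries_incr_1. ring. Qed.

Lemma PS_derive_Li2_coef (k : nat) : PS_derive (PS_incr_1 Li2_coef) k = log_coef k.
Proof.
  unfold PS_derive, log_coef. simpl (PS_incr_1 Li2_coef (S k)). unfold Li2_coef.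
  field. apply not_0_INR. lia.
Qed.

Lemma PS_derive_log_coef (k : nat) : PS_derive (PS_incr_1 log_coef) k = 1.
Proof.
  unfold PS_derive. simpl (PS_incr_1 log_coef (S k)). unfold log_coef.
  field. apply not_0_INR. lia.
Qed.

Lemma CV_radius_Li2_coef : CV_radius Li2_coef = 1.
Proof.
  replace (Finite 1) with (Finite (/ 1)) by (f_equal; apply Rinv_1).
  apply CV_radius_finite_DAlembert; [| lra |].
  - intro k. apply Rinv_neq_0_compat, pow_nonzero, not_0_INR. lia.
  - assert (Hinv : is_lim_seq (fun k => / INR (S (S k))) 0).
    { assert (H := is_lim_seq_inv INR p_infty is_lim_seq_INR ltac:(discriminate)).
      do 2 apply is_lim_seq_incr_1 in H. exact H. }
    apply is_lim_seq_ext with (fun k => (1 - / INR (S (S k))) * (1 - / INR (S (S k)))).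
    + intro k. unfold Li2_coef. rewrite Rabs_pos_eq.
      * rewrite !S_INR. field. pose proof (pos_INR k). lra.
      * apply Rlt_le, Rdiv_lt_0_compat; apply Rinv_0_lt_compat, pow_lt, lt_0_INR; lia.
    + assert (H1 := is_lim_seq_minus' _ _ 1 0 (is_lim_seq_const 1) Hinv).
      rewrite Rminus_0_r in H1.
      replace (Finite 1) with (Finite (1 * 1)) by (f_equal; ring).
      exact (is_lim_seq_mult' _ _ _ _ H1 H1).
Qed.

Lemma CV_radius_log_coef : CV_radius log_coef = 1.
Proof.
  rewrite <- (CV_radius_ext _ _ PS_derive_Li2_coef), CV_radius_derive, CV_radius_incr_1.
  exact CV_radius_Li2_coef.
Qed.

Lemma PSeries_geom (x : R) : -1 < x < 1 -> PSeries (fun _ => 1) x = / (1 - x).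
Proof.
  intro Hx. apply is_series_unique.
  apply is_series_ext with (fun n => x ^ n);
    [intro n; unfold scal; simpl; unfold mult; simpl; ring |].
  apply is_series_geom. apply Rabs_def1; lra.
Qed.

Lemma log_series (x : R) : -1 < x < 1 -> PSeries (PS_incr_1 log_coef) x = - ln (1 - x).
Proof.
  intro Hx.
  enough (H : PSeries (PS_incr_1 log_coef) x + ln (1 - x)
              = PSeries (PS_incr_1 log_coef) 0 + ln (1 - 0)).
  { rewrite (PSeries_incr_1 log_coef 0), Rminus_0_r, ln_1 in H. lra. }
  apply (is_derive_0_const (fun t => PSeries (PS_incr_1 log_coef) t + ln (1 - t)) (-1) 1);
    [| exact Hx | lra].
  intros t Ht.
  replace 0 with (PSeries (PS_derive (PS_incr_1 log_coef)) t + - / (1 - t)).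
  - assert (Hseries : is_derive (PSeries (PS_incr_1 log_coef)) t
                         (PSeries (PS_derive (PS_incr_1 log_coef)) t)).
    { apply is_derive_PSeries. rewrite CV_radius_incr_1, CV_radius_log_coef.
      simpl. apply Rabs_def1; lra. }
    assert (Hln : is_derive (fun t => ln (1 - t)) t (- / (1 - t)))
      by (auto_derive; [lra | field; lra]).
    exact (is_derive_plus _ _ _ _ _ Hseries Hln).
  - rewrite (PSeries_ext _ _ t PS_derive_log_coef), PSeries_geom by lra. ring.
Qed.

Lemma is_derive_Li2_PSeries (x : R) : -1 < x < 1 -> is_derive Li2 x (PSeries log_coef x).
Proof.
  intro Hx. apply is_derive_ext with (PSeries (PS_incr_1 Li2_coef));
    [intro t; symmetry; apply Li2_PSeries |].
  rewrite <- (PSeries_ext _ _ x PS_derive_Li2_coef).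
  apply is_derive_PSeries. rewrite CV_radius_incr_1, CV_radius_Li2_coef.
  simpl. apply Rabs_def1; lra.
Qed.

Lemma is_derive_Li2 (x : R) : -1 < x < 1 -> x <> 0 -> is_derive Li2 x (- ln (1 - x) / x).
Proof.
  intros Hx Hx0. rewrite <- log_series, PSeries_incr_1 by exact Hx.
  replace (x * PSeries log_coef x / x) with (PSeries log_coef x) by (field; exact Hx0).
  apply is_derive_Li2_PSeries, Hx.
Qed.

Lemma continuous_Li2_0 : continuous Li2 0.
Proof. apply (is_derive_continuous _ _ _ (is_derive_Li2_PSeries 0 ltac:(lra))). Qed.

Lemma Li2_1 : Li2 1 = PI ^ 2 / 6.
Proof.
  apply is_series_unique. unfold Li2.
  apply is_series_ext with (fun k => / INR (S k) ^ 2); [| exact basel].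
  intro k. rewrite pow1. symmetry. apply Rmult_1_l.
Qed.

Lemma Li2_at_left_1 : filterlim Li2 (at_left 1) (locally (PI ^ 2 / 6)).
Proof.
  assert (Hr : CV_radius (PS_incr_1 Li2_coef) = 1)
    by (rewrite CV_radius_incr_1; exact CV_radius_Li2_coef).
  assert (Hex : ex_pseries (PS_incr_1 Li2_coef) 1).
  { assert (H1 : is_pseries Li2_coef 1 (PI ^ 2 / 6)).
    { apply is_series_ext with (fun k => / INR (S k) ^ 2); [| exact basel].
      intro k. unfold scal. simpl. unfold mult. simpl. rewrite pow1. symmetry. apply Rmult_1_l. }
    exact (ex_intro _ _ (is_pseries_incr_1 _ _ _ H1)). }
  assert (H := Abel (PS_incr_1 Li2_coef)).
  rewrite Hr in H. specialize (H ltac:(simpl; lra) I Hex).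
  change (real (Finite 1)) with 1 in H.
  rewrite <- Li2_PSeries, Li2_1 in H.
  apply filterlim_ext with (2 := H). intro x. symmetry. apply Li2_PSeries.
Qed.

Lemma ln_le_sub_1 (y : R) : 0 < y -> ln y <= y - 1.
Proof.
  intro Hy. rewrite <- (ln_exp (y - 1)).
  apply ln_le; [exact Hy |]. pose proof (exp_ineq1_le (y - 1)). lra.
Qed.

Lemma ln_ge_1_sub_inv (y : R) : 0 < y -> 1 - / y <= ln y.
Proof.
  intro Hy. pose proof (ln_le_sub_1 (/ y) (Rinv_0_lt_compat _ Hy)) as H.
  rewrite ln_Rinv in H by exact Hy. lra.
Qed.

Lemma ln_mul_ln_1_sub_bound (x : R) : 0 < x <= / 2 -> Rabs (ln x * ln (1 - x)) <= 4 * sqrt x.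
Proof.
  intro Hx.
  assert (Hs : 0 < sqrt x) by (apply sqrt_lt_R0; lra).
  assert (Hss : sqrt x * sqrt x = x) by (apply sqrt_sqrt; lra).
  (* [- ln x = - 2 ln (sqrt x) <= 2 (/ sqrt x - 1)] and [- ln (1 - x) <= / (1 - x) - 1 <= 2 x] *)
  assert (Hln_x : 0 <= - ln x <= 2 / sqrt x).
  { assert (E : ln x = 2 * ln (sqrt x)) by (rewrite <- Hss at 1; rewrite ln_mult by lra; ring).
    pose proof (ln_le_sub_1 x ltac:(lra)). pose proof (ln_ge_1_sub_inv (sqrt x) Hs).
    assert (0 < / sqrt x) by (apply Rinv_0_lt_compat; lra).
    unfold Rdiv. lra. }
  assert (Hln_1x : 0 <= - ln (1 - x) <= 2 * x).
  { pose proof (ln_le_sub_1 (1 - x) ltac:(lra)). pose proof (ln_ge_1_sub_inv (1 - x) ltac:(lra)).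
    assert (/ (1 - x) <= 1 + 2 * x).
    { apply (Rmult_le_reg_r (1 - x)); [lra |]. rewrite Rinv_l by lra. nra. }
    lra. }
  replace (ln x * ln (1 - x)) with ((- ln x) * (- ln (1 - x))) by ring.
  rewrite Rabs_pos_eq by nra.
  apply Rle_trans with ((2 / sqrt x) * (2 * x)); [apply Rmult_le_compat; lra |].
  rewrite <- Hss at 2. right. field. lra.
Qed.

Lemma ln_nonpos (x : R) : x <= 0 -> ln x = 0.
Proof. intro Hx. unfold ln. destruct (Rlt_dec 0 x); [exfalso; lra | reflexivity]. Qed.

(* For [x <= 0] Rocq's [ln x] is [0], so the product vanishes to the left of [0]. *)
Lemma continuous_ln_mul_ln_1_sub_0 : continuous (fun x => ln x * ln (1 - x)) 0.
Proof.
  apply continuity_pt_filterlim. intros eps Heps.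
  exists (Rmin (/ 2) ((eps / 4) ^ 2)). split; [apply Rmin_glb_lt; [lra | apply pow_lt; lra] |].
  intros x [_ Hx].
  change (Rabs (x - 0) < Rmin (/ 2) ((eps / 4) ^ 2)) in Hx.
  change (Rabs (ln x * ln (1 - x) - ln 0 * ln (1 - 0)) < eps).
  rewrite (ln_nonpos 0), Rmult_0_l, !Rminus_0_r in * by lra.
  destruct (Rle_dec x 0) as [Hneg | Hpos].
  - rewrite ln_nonpos, Rmult_0_l, Rabs_R0 by exact Hneg. lra.
  - assert (Hxe : x < (eps / 4) ^ 2 /\ x < / 2).
    { pose proof (Rmin_l (/ 2) ((eps / 4) ^ 2)). pose proof (Rmin_r (/ 2) ((eps / 4) ^ 2)).
      pose proof (RRle_abs x). lra. }
    apply Rle_lt_trans with (4 * sqrt x); [apply ln_mul_ln_1_sub_bound; lra |].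
    assert (sqrt x < eps / 4) by (rewrite <- (sqrt_pow2 (eps / 4)) by lra; apply sqrt_lt_1; lra).
    lra.
Qed.

Definition RogersL_deriv (x : R) : R := - (ln (1 - x) / x + ln x / (1 - x)) / 2.

Lemma is_derive_RogersL (x : R) : 0 < x < 1 -> is_derive RogersL x (RogersL_deriv x).
Proof.
  intro Hx.
  assert (HLi2 := is_derive_Li2 x ltac:(lra) ltac:(lra)).
  assert (Hlog : is_derive (fun t => / 2 * ln t * ln (1 - t)) x
                   (/ 2 * (/ x * ln (1 - x) - ln x / (1 - x))))
    by (auto_derive; [lra | unfold Rminus; field; lra]).
  assert (H := is_derive_plus _ _ _ _ _ HLi2 Hlog).
  unfold RogersL_deriv. replace (- (ln (1 - x) / x + ln x / (1 - x)) / 2) with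
    (plus (- ln (1 - x) / x) (/ 2 * (/ x * ln (1 - x) - ln x / (1 - x))))
    by (unfold plus; simpl; field; lra).
  exact H.
Qed.

Lemma RogersL_0 : RogersL 0 = 0.
Proof. unfold RogersL. rewrite Li2_0, ln_nonpos by lra. ring. Qed.

Lemma continuous_RogersL_0 : continuous RogersL 0.
Proof.
  apply continuous_ext with (fun x => plus (Li2 x) (scal (/ 2) (ln x * ln (1 - x)))).
  { intro x. unfold RogersL, plus, scal. simpl. unfold mult. simpl. ring. }
  exact (continuous_plus _ _ _ continuous_Li2_0
           (continuous_scal_r _ _ _ continuous_ln_mul_ln_1_sub_0)).
Qed.

Lemma RogersL_reflection (x : R) : 0 < x < 1 -> RogersL x + RogersL (1 - x) = PI ^ 2 / 6.
Proof.
  apply (is_derive_0_lim (fun t => RogersL t + RogersL (1 - t)) 0 1 _ (at_left 1)).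
  - intros t Ht.
    assert (H1 := is_derive_RogersL t Ht).
    assert (H2 := is_derive_comp RogersL (fun t => 1 - t) t _ (-1)
                    (is_derive_RogersL (1 - t) ltac:(lra)) ltac:(auto_derive; [trivial | ring])).
    refine (eq_ind _ (is_derive _ t) (is_derive_plus _ _ t _ _ H1 H2) _ _).
    unfold plus, scal, RogersL_deriv. simpl. unfold mult. simpl.
    replace (1 - (1 - t)) with t by ring. field. lra.
  - apply at_left_interval. lra.
  - set (M := fun u => Li2 u + ln u * ln (1 - u)).
    assert (HM : continuous M 0).
    { exact (continuous_plus _ _ _ continuous_Li2_0 continuous_ln_mul_ln_1_sub_0). }
    assert (H1t : filterlim (fun t => 1 - t) (at_left 1) (locally 0)).
    { replace 0 with (1 - 1) by ring. apply continuous_at_left.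
      apply (ex_derive_continuous (V := R_NormedModule)). auto_derive. trivial. }
    assert (HM0 : M 0 = 0). { unfold M. rewrite Li2_0, ln_nonpos by lra. ring. }
    apply filterlim_ext with (fun t => Li2 t + M (1 - t)).
    { intro t. unfold M, RogersL. replace (1 - (1 - t)) with t by ring. field. }
    replace (PI ^ 2 / 6) with (PI ^ 2 / 6 + M 0) by (rewrite HM0; ring).
    apply filterlim_Rplus; [exact Li2_at_left_1 |].
    exact (filterlim_comp _ _ _ _ M _ _ _ H1t HM).
Qed.

Lemma RogersL_deriv_five_term (t y : R) : 0 < t < 1 -> 0 < y < 1 ->
  RogersL_deriv t - y * RogersL_deriv (t * y)
  - (1 - y) / (1 - t * y) ^ 2 * RogersL_deriv (t * (1 - y) / (1 - t * y))
  + y * (1 - y) / (1 - t * y) ^ 2 * RogersL_deriv (y * (1 - t) / (1 - t * y)) = 0.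
Proof.
  intros Ht Hy. assert (Hty : 0 < 1 - t * y) by nra.
  unfold RogersL_deriv.
  replace (1 - t * (1 - y) / (1 - t * y)) with ((1 - t) / (1 - t * y)) by (field; lra).
  replace (1 - y * (1 - t) / (1 - t * y)) with ((1 - y) / (1 - t * y)) by (field; lra).
  rewrite !ln_div, !ln_mult by nra.
  field. lra.
Qed.

Lemma is_derive_RogersL_comp (g : R -> R) (t dg : R) :
  is_derive g t dg -> 0 < g t < 1 ->
  is_derive (fun s => RogersL (g s)) t (dg * RogersL_deriv (g t)).
Proof. intros Hg Hgt. exact (is_derive_comp _ _ t _ _ (is_derive_RogersL _ Hgt) Hg). Qed.

Lemma continuous_RogersL (x : R) : 0 <= x < 1 -> continuous RogersL x.
Proof.
  intro Hx. destruct (Req_dec x 0) as [-> | Hx0]; [exact continuous_RogersL_0 |].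
  apply (is_derive_continuous _ _ _ (is_derive_RogersL x ltac:(lra))).
Qed.

Lemma continuous_RogersL_comp (g : R -> R) (x : R) :
  ex_derive g x -> 0 <= g x < 1 -> continuous (fun s => RogersL (g s)) x.
Proof.
  intros Hg Hgx. apply continuous_comp; [| exact (continuous_RogersL _ Hgx)].
  exact (ex_derive_continuous (V := R_NormedModule) _ _ Hg).
Qed.

Definition RogersL_five_term_defect (y t : R) : R :=
  RogersL t + RogersL y - RogersL (t * y)
  - RogersL (t * (1 - y) / (1 - t * y)) - RogersL (y * (1 - t) / (1 - t * y)).

Lemma is_derive_RogersL_five_term_defect (y t : R) : 0 < y < 1 -> 0 < t < 1 ->
  is_derive (RogersL_five_term_defect y) t 0.
Proof.
  intros Hy Ht. assert (Hty : 0 < 1 - t * y) by nra.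
  assert (Hu : 0 < t * (1 - y) / (1 - t * y) < 1).
  { split; [apply Rdiv_lt_0_compat; nra |].
    apply Rmult_lt_reg_r with (1 - t * y); [lra |]. field_simplify; nra. }
  assert (Hv : 0 < y * (1 - t) / (1 - t * y) < 1).
  { split; [apply Rdiv_lt_0_compat; nra |].
    apply Rmult_lt_reg_r with (1 - t * y); [lra |]. field_simplify; nra. }
  assert (D1 := is_derive_RogersL t Ht).
  assert (D2 := is_derive_RogersL_comp (fun t => t * y) t y
                  ltac:(auto_derive; [trivial | ring]) ltac:(nra)).
  assert (D3 := is_derive_RogersL_comp (fun t => t * (1 - y) / (1 - t * y)) t
                  ((1 - y) / (1 - t * y) ^ 2) ltac:(auto_derive; [lra | field; lra]) Hu).
  assert (D4 := is_derive_RogersL_comp (fun t => y * (1 - t) / (1 - t * y)) t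
                  (- (y * (1 - y) / (1 - t * y) ^ 2)) ltac:(auto_derive; [lra | field; lra]) Hv).
  assert (D0 := is_derive_const (K := R_AbsRing) (RogersL y) t).
  pose proof (RogersL_deriv_five_term t y Ht Hy) as Hid.
  refine (eq_ind _ (is_derive _ t)
            (is_derive_minus _ _ _ _ _ (is_derive_minus _ _ _ _ _ (is_derive_minus _ _ _ _ _
               (is_derive_plus _ _ _ _ _ D1 D0) D2) D3) D4) _ _).
  unfold minus, plus, opp, zero. simpl in Hid |- *. lra.
Qed.

Lemma RogersL_five_term_defect_0 (y : R) : RogersL_five_term_defect y 0 = 0.
Proof.
  unfold RogersL_five_term_defect.
  replace (0 * (1 - y) / (1 - 0 * y)) with 0 by field.
  replace (y * (1 - 0) / (1 - 0 * y)) with y by field.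
  rewrite Rmult_0_l, RogersL_0. ring.
Qed.

Lemma continuous_RogersL_five_term_defect_0 (y : R) : 0 < y < 1 ->
  continuous (RogersL_five_term_defect y) 0.
Proof.
  intro Hy.
  assert (C2 := continuous_RogersL_comp (fun t => t * y) 0
                  ltac:(auto_derive; trivial) ltac:(cbv beta; rewrite Rmult_0_l; lra)).
  assert (C3 := continuous_RogersL_comp (fun t => t * (1 - y) / (1 - t * y)) 0
                  ltac:(auto_derive; lra) ltac:(cbv beta; rewrite Rmult_0_l, Rdiv_0_l; lra)).
  assert (C4 := continuous_RogersL_comp (fun t => y * (1 - t) / (1 - t * y)) 0
                  ltac:(auto_derive; lra)
                  ltac:(cbv beta; rewrite Rmult_0_l, Rminus_0_r, Rdiv_1_r, Rmult_1_r; lra)).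
  exact (continuous_minus _ _ _ (continuous_minus _ _ _ (continuous_minus _ _ _
           (continuous_plus _ _ _ continuous_RogersL_0 (continuous_const _ _)) C2) C3) C4).
Qed.

Lemma RogersL_five_term_div (x y : R) : 0 < x < 1 -> 0 < y < 1 ->
  RogersL x + RogersL y
  = RogersL (x * y) + RogersL (x * (1 - y) / (1 - x * y)) + RogersL (y * (1 - x) / (1 - x * y)).
Proof.
  intros Hx Hy.
  enough (H : RogersL_five_term_defect y x = 0)
    by (unfold RogersL_five_term_defect in H; lra).
  apply (is_derive_0_lim (RogersL_five_term_defect y) 0 1 0 (at_right 0));
    [intros t Ht; exact (is_derive_RogersL_five_term_defect y t Hy Ht) |
     apply at_right_interval; lra | | exact Hx].
  rewrite <- (RogersL_five_term_defect_0 y) at 2.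
  apply continuous_at_right, continuous_RogersL_five_term_defect_0, Hy.
Qed.

Lemma RogersL_five_term (x y p q r : R) : 0 < x < 1 -> 0 < y < 1 ->
  p = x * y -> q * (1 - p) = x * (1 - y) -> r * (1 - p) = y * (1 - x) ->
  RogersL x + RogersL y = RogersL p + RogersL q + RogersL r.
Proof.
  intros Hx Hy -> Hq Hr. assert (Hxy : 1 - x * y <> 0) by nra.
  rewrite RogersL_five_term_div by assumption.
  replace (x * (1 - y) / (1 - x * y)) with q by (rewrite <- Hq; field; exact Hxy).
  replace (y * (1 - x) / (1 - x * y)) with r by (rewrite <- Hr; field; exact Hxy).
  reflexivity.
Qed.

Lemma RogersL_reflection_sum (x y : R) : 0 < x < 1 -> x + y = 1 ->
  RogersL x + RogersL y = PI ^ 2 / 6.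
Proof. intros Hx Hxy. replace y with (1 - x) by lra. exact (RogersL_reflection x Hx). Qed.

Section RootOfP6.

Variable x : R.
Hypothesis P6_x : P6 x = 0.
Hypothesis x_bounds : 7 / 10 < x < 701 / 1000.

Lemma root_pow_bounds :
  (7 / 10) ^ 2 <= x ^ 2 <= (701 / 1000) ^ 2 /\ (7 / 10) ^ 3 <= x ^ 3 <= (701 / 1000) ^ 3 /\
  (7 / 10) ^ 4 <= x ^ 4 <= (701 / 1000) ^ 4 /\ (7 / 10) ^ 5 <= x ^ 5 <= (701 / 1000) ^ 5.
Proof. repeat split; apply pow_incr; lra. Qed.

Ltac in_unit_interval := pose proof root_pow_bounds; split; lra.
Ltac mod_P6 := pose proof P6_x as HP; unfold P6 in HP; simpl in HP |- *; nsatz.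

Lemma RogersL_five_term_relations :
  RogersL (2 - 2 * x - 2 * x ^ 2 + x ^ 3 + 2 * x ^ 4 + x ^ 5)
  + RogersL (- 1 + x + 3 * x ^ 2 - x ^ 4 - x ^ 5)
  = RogersL (2 - x - x ^ 2 - x ^ 3) + RogersL (- 1 + x + 2 * x ^ 2 - x ^ 4 - x ^ 5)
    + RogersL (2 * x + x ^ 2 - 2 * x ^ 3 - 2 * x ^ 4 - x ^ 5) /\
  RogersL (1 - 2 * x - x ^ 2 + 2 * x ^ 3 + 2 * x ^ 4 + x ^ 5)
  + RogersL (2 - 5 * x - 3 * x ^ 2 + 5 * x ^ 3 + 6 * x ^ 4 + 3 * x ^ 5)
  = RogersL (- 1 + 5 * x + 3 * x ^ 2 - 5 * x ^ 3 - 6 * x ^ 4 - 3 * x ^ 5)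
    + RogersL (x + x ^ 2 - x ^ 3 - 2 * x ^ 4 - x ^ 5)
    + RogersL (2 * x + x ^ 2 - 2 * x ^ 3 - 2 * x ^ 4 - x ^ 5) /\
  RogersL (1 - x ^ 2) + RogersL x
  = RogersL (x - x ^ 3) + RogersL (2 - x - 3 * x ^ 2 + x ^ 4 + x ^ 5)
    + RogersL (- 1 + x + x ^ 2 + x ^ 3) /\
  RogersL (2 - 2 * x - 2 * x ^ 2 + x ^ 3 + 2 * x ^ 4 + x ^ 5)
  + RogersL (2 - x - 2 * x ^ 2 + x ^ 4 + x ^ 5)
  = RogersL (1 - 2 * x - x ^ 2 + 2 * x ^ 3 + 2 * x ^ 4 + x ^ 5) + RogersL (1 - x)
    + RogersL (1 - x ^ 2) /\
  RogersL (2 * x + x ^ 2 - 2 * x ^ 3 - 2 * x ^ 4 - x ^ 5)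
  + RogersL (2 * x + x ^ 2 - 2 * x ^ 3 - 2 * x ^ 4 - x ^ 5)
  = RogersL (- 1 + 5 * x + 3 * x ^ 2 - 5 * x ^ 3 - 6 * x ^ 4 - 3 * x ^ 5)
    + RogersL (x - x ^ 3) + RogersL (x - x ^ 3) /\
  RogersL (- 1 + x + 3 * x ^ 2 - x ^ 4 - x ^ 5)
  + RogersL (1 - x - x ^ 2 + x ^ 3 + 2 * x ^ 4 + x ^ 5)
  = RogersL (2 - 2 * x - 2 * x ^ 2 + x ^ 3 + 2 * x ^ 4 + x ^ 5)
    + RogersL (- 1 + 2 * x + 2 * x ^ 2 - x ^ 3 - 2 * x ^ 4 - x ^ 5) + RogersL (x ^ 2).
Proof.
  repeat split.
  all: apply RogersL_five_term; [in_unit_interval | in_unit_interval | mod_P6 ..].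
Qed.

Lemma RogersL_reflection_relations :
  RogersL (2 - 2 * x - 2 * x ^ 2 + x ^ 3 + 2 * x ^ 4 + x ^ 5)
  + RogersL (- 1 + 2 * x + 2 * x ^ 2 - x ^ 3 - 2 * x ^ 4 - x ^ 5) = PI ^ 2 / 6 /\
  RogersL (- 1 + x + 3 * x ^ 2 - x ^ 4 - x ^ 5)
  + RogersL (2 - x - 3 * x ^ 2 + x ^ 4 + x ^ 5) = PI ^ 2 / 6 /\
  RogersL (2 - x - x ^ 2 - x ^ 3) + RogersL (- 1 + x + x ^ 2 + x ^ 3) = PI ^ 2 / 6 /\
  RogersL (- 1 + x + 2 * x ^ 2 - x ^ 4 - x ^ 5)
  + RogersL (2 - x - 2 * x ^ 2 + x ^ 4 + x ^ 5) = PI ^ 2 / 6 /\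
  RogersL (2 * x + x ^ 2 - 2 * x ^ 3 - 2 * x ^ 4 - x ^ 5)
  + RogersL (1 - 2 * x - x ^ 2 + 2 * x ^ 3 + 2 * x ^ 4 + x ^ 5) = PI ^ 2 / 6 /\
  RogersL (2 - 5 * x - 3 * x ^ 2 + 5 * x ^ 3 + 6 * x ^ 4 + 3 * x ^ 5)
  + RogersL (- 1 + 5 * x + 3 * x ^ 2 - 5 * x ^ 3 - 6 * x ^ 4 - 3 * x ^ 5) = PI ^ 2 / 6 /\
  RogersL (x + x ^ 2 - x ^ 3 - 2 * x ^ 4 - x ^ 5)
  + RogersL (1 - x - x ^ 2 + x ^ 3 + 2 * x ^ 4 + x ^ 5) = PI ^ 2 / 6 /\
  RogersL (1 - x ^ 2) + RogersL (x ^ 2) = PI ^ 2 / 6 /\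
  RogersL x + RogersL (1 - x) = PI ^ 2 / 6.
Proof.
  repeat split.
  all: apply RogersL_reflection_sum; [in_unit_interval | ring].
Qed.

Lemma RogersL_ladder_P6 : RogersL x + RogersL (2 - x - x ^ 2 - x ^ 3) = 4 * PI ^ 2 / 21.
Proof.
  (* Seven times the identity is the combination of the five-term relations with
     coefficients -3, 1, 4, 3, -2, -1 and of the reflections with -1, 4, 4, -3, 2, -1, 1, -1, 3. *)
  pose proof RogersL_five_term_relations. pose proof RogersL_reflection_relations. lra.
Qed.

End RootOfP6.

Lemma is_derive_P6 (x : R) : is_derive P6 x (6 * x ^ 5 + 5 * x ^ 4 - 6 * x ^ 2 + 2).
Proof. unfold P6. auto_derive; [trivial | ring]. Qed.

Lemma P6_increasing (a b : R) : 0 <= a -> a < b -> b <= 1 -> P6 a < P6 b.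
Proof.
  apply (incr_function_le P6 0 1 (fun x => 6 * x ^ 5 + 5 * x ^ 4 - 6 * x ^ 2 + 2));
    [intros; apply is_derive_P6 |].
  intros c Hc0 Hc1. simpl in Hc0, Hc1.
  assert (0 <= c ^ 5) by (apply pow_le; lra).
  assert (0 <= (c ^ 2 - 3 / 5) ^ 2) by apply pow2_ge_0.
  nra.
Qed.

Lemma P6_injective_neg (a b : R) : -2 <= a <= -1 -> -2 <= b <= -1 -> P6 a = P6 b -> a = b.
Proof.
  assert (Hdecr : forall u v, -2 <= u -> u < v -> v <= -1 -> - P6 u < - P6 v).
  { apply (incr_function_le (fun x => - P6 x) (-2) (-1)
             (fun x => - (6 * x ^ 5 + 5 * x ^ 4 - 6 * x ^ 2 + 2)));
      [intros; apply (is_derive_opp P6), is_derive_P6 |].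
    intros c Hc0 Hc1. simpl in Hc0, Hc1.
    assert (Hc2 : 1 <= c ^ 2) by nra.
    assert (Hc4 : 1 <= c ^ 4) by (replace (c ^ 4) with (c ^ 2 * c ^ 2) by ring; nra).
    replace (c ^ 5) with (c * c ^ 4) by ring. nra. }
  intros Ha Hb Hab. destruct (Rtotal_order a b) as [H | [H | H]]; [| exact H |].
  - specialize (Hdecr a b ltac:(lra) H ltac:(lra)). lra.
  - specialize (Hdecr b a ltac:(lra) H ltac:(lra)). lra.
Qed.

Lemma P6_lt_inv (a b : R) : 0 <= a <= 1 -> 0 <= b <= 1 -> P6 a < P6 b -> a < b.
Proof.
  intros Ha Hb Hab. destruct (Rlt_or_le a b) as [H | H]; [exact H | exfalso].
  destruct (Rle_lt_or_eq_dec _ _ H) as [Hba | ->]; [| lra].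
  pose proof (P6_increasing b a ltac:(lra) Hba ltac:(lra)). lra.
Qed.

Lemma P6_root_bounds (x : R) : 0 < x < 1 -> P6 x = 0 -> 7 / 10 < x < 701 / 1000.
Proof.
  intros Hx Hroot.
  split; apply P6_lt_inv; try lra; rewrite Hroot; unfold P6; lra.
Qed.

Lemma P6_root_conj (x : R) : P6 x = 0 -> x <> 1 -> P6 (x ^ 3 / (x - 1)) = 0.
Proof.
  intros Hroot Hx1. set (w := x ^ 3 / (x - 1)).
  assert (Hw : w * (x - 1) = x ^ 3) by (unfold w; field; lra).
  assert (H : P6 w * (x - 1) ^ 6 = 0) by (unfold P6 in *; simpl in *; nsatz).
  apply Rmult_integral in H as [H | H]; [exact H |].
  exfalso. apply (pow_nonzero (x - 1) 6); [lra | exact H].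
Qed.

Lemma P6_root_conj_bounds (x : R) : 7 / 10 < x < 701 / 1000 -> -2 <= x ^ 3 / (x - 1) <= -1.
Proof.
  intro Hx.
  assert (H3 : (7 / 10) ^ 3 <= x ^ 3 <= (701 / 1000) ^ 3) by (split; apply pow_incr; lra).
  assert (Hq : x ^ 3 / (x - 1) * (1 - x) = - x ^ 3) by (field; lra).
  split; nra.
Qed.

Lemma P6_root_conj_inv (x : R) : P6 x = 0 -> 0 < x < 1 ->
  1 / (1 - x ^ 3 / (x - 1)) = 2 - x - x ^ 2 - x ^ 3.
Proof.
  intros Hroot Hx.
  assert (Hd : x - 1 - x ^ 3 <> 0) by (pose proof (pow_lt x 3 ltac:(lra)); lra).
  replace (1 - x ^ 3 / (x - 1)) with ((x - 1 - x ^ 3) / (x - 1)) by (field; lra).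
  field_simplify_eq; [| split; [lra | exact Hd]].
  clear Hx Hd. unfold P6 in Hroot. simpl in Hroot |- *. nsatz.
Qed.

Theorem mainTheorem5 (x0 x1 : R) :
  0 < x0 < 1 -> P6 x0 = 0 ->
  -2 < x1 < -1 -> P6 x1 = 0 ->
  RogersL x0 + RogersL (1 / (1 - x1)) = 4 * PI ^ 2 / 21.
Proof.
  intros Hx0 HP0 Hx1 HP1.
  pose proof (P6_root_bounds x0 Hx0 HP0) as Hb.
  assert (Hx1w : x1 = x0 ^ 3 / (x0 - 1)).
  { apply P6_injective_neg; [lra | exact (P6_root_conj_bounds x0 Hb) |].
    rewrite HP1, P6_root_conj; [reflexivity | exact HP0 | lra]. }
  replace (1 / (1 - x1)) with (2 - x0 - x0 ^ 2 - x0 ^ 3).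
  - exact (RogersL_ladder_P6 x0 HP0 Hb).
  - rewrite Hx1w. symmetry. apply P6_root_conj_inv; [exact HP0 | lra].
Qed.
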